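(* Let $M$ and $N$ be finitely generated, semipositive binoids. Then for every $q\in\mathbb N_+$ $$\operatorname{HKF}(M\wedge N,q)=\operatorname{HKF}(M,q)\cdot\operatorname{HKF}(N,q).$$
   Context: A binoid $(N,+,0,\infty)$ is a commutative monoid $(N,+,0)$ with an element $\infty$ satisfying $a+\infty=\infty$ for all $a\in N$. Write $N^\bullet=N\setminus\{\infty\}$, $N^\times$ for the group of units of $N$ and $N_+=N\setminus N^\times$. $N$ is finitely generated if it is finitely generated as a monoid; semipositive if $N\neq\{\infty\}$ and $N^\times$ is finite. The smash product $M\wedge N$ is the binoid $(M^\bullet\times N^\bullet)\cup\{\infty\}$ with $(a,b)+(c,d)=(a+c,b+d)$ if $a+c\neq\infty$ and $b+d\neq\infty$, and $=\infty$ otherwise. An ideal of $N$ is a nonempty subset $I\subseteq N$ with $I+N\subseteq I$. For an ideal $I$ and $q\in\mathbb N_+$, $[q]I$ denotes the ideal generated by $\{qa: a\in I\}$; $N/I=(N\setminus I)\cup\{\infty\}$. $\operatorname{HKF}(N,q)=\#N/[q]N_+$, with $\#S=|S|-1$ for a finite pointed set $S$. *)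

From Stdlib Require Import List Arith ClassicalEpsilon.
Import ListNotations.

Record binoid_data : Type := BinoidData {
  car :> Type;
  bop : car -> car -> car;
  bzero : car;
  binf : car
}.

Definition is_binoid (N : binoid_data) : Prop :=
  (forall a b c : N, bop N a (bop N b c) = bop N (bop N a b) c) /\
  (forall a b : N, bop N a b = bop N b a) /\
  (forall a : N, bop N (bzero N) a = a) /\
  (forall a : N, bop N a (binf N) = binf N).

Inductive gen_by (N : binoid_data) (S : N -> Prop) : N -> Prop :=
  | gen_zero : gen_by N S (bzero N)
  | gen_base : forall x, S x -> gen_by N S x
  | gen_add : forall x y, gen_by N S x -> gen_by N S y -> gen_by N S (bop N x y).

Definition fin_generated (N : binoid_data) : Prop :=
  exists gens : list N, forall x : N, gen_by N (fun g => In g gens) x.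

Definition is_unit (N : binoid_data) (x : N) : Prop :=
  exists y : N, bop N x y = bzero N.

Definition Nplus (N : binoid_data) (x : N) : Prop := ~ is_unit N x.

Definition semipositive (N : binoid_data) : Prop :=
  (exists x : N, x <> binf N) /\
  (exists s : list N, forall u : N, is_unit N u -> In u s).

Fixpoint nsmul (N : binoid_data) (q : nat) (a : N) : N :=
  match q with
  | 0 => bzero N
  | S q' => bop N a (nsmul N q' a)
  end.

(** The ideal generated by a set S: the smallest ideal containing S,
    i.e. (S + N) together with oo (ideals are nonempty, hence contain oo). *)
Definition gen_ideal (N : binoid_data) (S : N -> Prop) (y : N) : Prop :=
  y = binf N \/ exists x n : N, S x /\ y = bop N x n.

Definition qideal (N : binoid_data) (q : nat) (I : N -> Prop) : N -> Prop :=
  gen_ideal N (fun y => exists a, I a /\ y = nsmul N q a).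

Definition has_card (T : Type) (P : T -> Prop) (n : nat) : Prop :=
  exists l : list T, List.NoDup l /\ List.length l = n /\ (forall x, P x <-> In x l).

(** HKF(N,q) = #(N/[q]N_+) = |(N \ [q]N_+) u {oo}| - 1 = |N \ [q]N_+|
    (since oo lies in every ideal).  [HKF_is N q n] says HKF(N,q) is finite
    and equals n. *)
Definition HKF_is (N : binoid_data) (q : nat) (n : nat) : Prop :=
  has_card (car N) (fun x : N => ~ qideal N q (Nplus N) x) n.

(** Smash product M ^ N = (M^. x N^.) u {oo}; [None] is oo. *)
Definition smash_pt (M N : binoid_data) : Type :=
  option {p : M * N | fst p <> binf M /\ snd p <> binf N}.

Definition smash_mk (M N : binoid_data) (a : M) (b : N) : smash_pt M N :=
  match excluded_middle_informative (a <> binf M /\ b <> binf N) with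
  | left h => Some (exist _ (a, b) h)
  | right _ => None
  end.

Definition smash_op (M N : binoid_data) (x y : smash_pt M N) : smash_pt M N :=
  match x, y with
  | Some (exist _ (a, b) _), Some (exist _ (c, d) _) =>
      smash_mk M N (bop M a c) (bop N b d)
  | _, _ => None
  end.

Definition smash (M N : binoid_data) : binoid_data :=
  @BinoidData (smash_pt M N) (smash_op M N) (smash_mk M N (bzero M) (bzero N)) None.

From Stdlib Require Import List Arith Lia ClassicalEpsilon Classical ProofIrrelevance.
Import ListNotations.

(* Since [0 <> oo] in both factors, a point [(a, b)] of [M ^ N] lies in
   [[q](M ^ N)_+] exactly when [a] lies in [[q]M_+] or [b] in [[q]N_+].  Hence
   the complement of [[q](M ^ N)_+] is the product of the two complements, and
   HKF is multiplicative once both complements are known to be finite. *)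

Section BinoidLaws.
Variable N : binoid_data.
Hypothesis HN : is_binoid N.
Local Notation "a ⊕ b" := (bop N a b) (at level 50, left associativity).

Lemma bopA a b c : a ⊕ (b ⊕ c) = a ⊕ b ⊕ c.
Proof. apply HN. Qed.

Lemma bopC a b : a ⊕ b = b ⊕ a.
Proof. apply HN. Qed.

Lemma bop0l a : bzero N ⊕ a = a.
Proof. apply HN. Qed.

Lemma bop0r a : a ⊕ bzero N = a.
Proof. rewrite bopC; apply bop0l. Qed.

Lemma bopinfr a : a ⊕ binf N = binf N.
Proof. apply HN. Qed.

Lemma bopinfl a : binf N ⊕ a = binf N.
Proof. rewrite bopC; apply bopinfr. Qed.

Lemma nsmulD n m g : nsmul N (n + m) g = nsmul N n g ⊕ nsmul N m g.
Proof.
  induction n as [|n IH]; simpl.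
  - now rewrite bop0l.
  - now rewrite IH, bopA.
Qed.

Lemma nsmul0 n : nsmul N n (bzero N) = bzero N.
Proof. induction n as [|n IH]; simpl; [reflexivity|]. now rewrite IH, bop0l. Qed.

Lemma unit_zero : is_unit N (bzero N).
Proof. exists (bzero N); apply bop0l. Qed.

Lemma unit_bop u v : is_unit N u -> is_unit N v -> is_unit N (u ⊕ v).
Proof.
  intros [u' Hu] [v' Hv]; exists (u' ⊕ v').
  rewrite bopA, <- (bopA u v u'), (bopC v u'), (bopA u u' v), Hu, bop0l.
  exact Hv.
Qed.

Lemma gen_ideal_bopr (S : N -> Prop) x y : gen_ideal N S x -> gen_ideal N S (x ⊕ y).
Proof.
  intros [->|[s [n [Hs ->]]]].
  - left; apply bopinfl.
  - right; exists s, (n ⊕ y); split; [exact Hs|now rewrite bopA].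
Qed.

Lemma semipositive_zero_neq_inf : semipositive N -> bzero N <> binf N.
Proof.
  intros [[x Hx] _] E; apply Hx.
  now rewrite <- (bop0l x), E, bopinfl.
Qed.

End BinoidLaws.

(* Outside [[q]N_+] every element is [u + n_1 g_1 + ... + n_k g_k] with [u] a
   unit, [g_i] the non-unit generators and [n_i < q]; there are finitely many
   such sums. *)
Section HKFFinite.
Variable N : binoid_data.
Hypothesis HN : is_binoid N.
Variable q : nat.
Hypothesis Hq : 0 < q.
Local Notation "a ⊕ b" := (bop N a b) (at level 50, left associativity).
Local Notation I := (qideal N q (Nplus N)).

Variable units : list N.
Hypothesis units_complete : forall u, is_unit N u -> In u units.

Fixpoint small_comb (gl : list N) (x : N) : Prop :=
  match gl with
  | [] => is_unit N x
  | g :: gl' => exists n y, n < q /\ small_comb gl' y /\ x = nsmul N n g ⊕ y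
  end.

Fixpoint small_combs (gl : list N) : list N :=
  match gl with
  | [] => units
  | g :: gl' =>
      flat_map (fun y => map (fun n => nsmul N n g ⊕ y) (seq 0 q)) (small_combs gl')
  end.

Lemma small_comb_in gl x : small_comb gl x -> In x (small_combs gl).
Proof.
  revert x; induction gl as [|g gl IH]; simpl; intros x Hx; auto.
  destruct Hx as [n [y [Hn [Hy ->]]]].
  apply in_flat_map; exists y; split; auto.
  apply in_map_iff; exists n; split; auto. apply in_seq; lia.
Qed.

Lemma small_comb_unit gl u : is_unit N u -> small_comb gl u.
Proof.
  induction gl as [|g gl IH]; simpl; intros Hu; auto.
  exists 0, u; repeat split; auto. simpl; now rewrite bop0l.
Qed.

(* A coefficient [n >= q] puts the sum into [[q]N_+] via [n g = q g + (n-q) g]. *)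
Lemma small_comb_reduce g gl n y : Nplus N g -> small_comb gl y ->
  I (nsmul N n g ⊕ y) \/ small_comb (g :: gl) (nsmul N n g ⊕ y).
Proof.
  intros Hg Hy; destruct (lt_dec n q) as [Hn|Hn].
  - right; exists n, y; repeat split; auto.
  - left; right; exists (nsmul N q g), (nsmul N (n - q) g ⊕ y); split.
    + exists g; auto.
    + replace n with (q + (n - q)) at 1 by lia.
      now rewrite nsmulD, bopA.
Qed.

Lemma small_comb_gen gl g : (forall h, In h gl -> Nplus N h) -> In g gl ->
  I g \/ small_comb gl g.
Proof.
  induction gl as [|h gl IH]; simpl; intros Hgl Hin; [contradiction|].
  destruct Hin as [->|Hin].
  - assert (H0 : small_comb gl (bzero N)) by apply small_comb_unit, unit_zero, HN.
    pose proof (small_comb_reduce g gl 1 _ (Hgl g (or_introl eq_refl)) H0) as H.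
    simpl nsmul in H; now rewrite !(bop0r N HN) in H.
  - destruct (IH (fun k hk => Hgl k (or_intror hk)) Hin) as [H|H]; [now left|].
    pose proof (small_comb_reduce h gl 0 g (Hgl h (or_introl eq_refl)) H) as H'.
    simpl nsmul in H'; now rewrite (bop0l N HN) in H'.
Qed.

Lemma small_comb_bop gl x y : (forall h, In h gl -> Nplus N h) ->
  small_comb gl x -> small_comb gl y -> I (x ⊕ y) \/ small_comb gl (x ⊕ y).
Proof.
  revert x y; induction gl as [|g gl IH]; simpl; intros x y Hgl Hx Hy.
  - right; now apply unit_bop.
  - destruct Hx as [n [x' [_ [Hx' ->]]]], Hy as [m [y' [_ [Hy' ->]]]].
    replace (nsmul N n g ⊕ x' ⊕ (nsmul N m g ⊕ y'))
      with (nsmul N (n + m) g ⊕ (x' ⊕ y')).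
    2:{ rewrite (nsmulD N HN), !(bopA N HN); f_equal.
        rewrite <- !(bopA N HN); f_equal; apply (bopC N HN). }
    destruct (IH x' y' (fun k hk => Hgl k (or_intror hk)) Hx' Hy') as [H|H].
    + left; rewrite (bopC N HN); now apply gen_ideal_bopr.
    + apply small_comb_reduce; auto.
Qed.

Definition nonunits (l : list N) : list N :=
  filter (fun g => if excluded_middle_informative (Nplus N g) then true else false) l.

Lemma gen_by_small_comb gens x : gen_by N (fun g => In g gens) x ->
  I x \/ small_comb (nonunits gens) x.
Proof.
  assert (Hnu : forall h, In h (nonunits gens) -> Nplus N h).
  { intros h Hh; apply filter_In in Hh as [_ Hh].
    destruct excluded_middle_informative; congruence. }
  induction 1 as [|g Hg|x y _ IHx _ IHy].
  - right; apply small_comb_unit, unit_zero, HN.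
  - destruct (classic (is_unit N g)) as [U|U].
    + right; now apply small_comb_unit.
    + apply small_comb_gen; auto. apply filter_In; split; auto.
      destruct excluded_middle_informative; auto; contradiction.
  - destruct IHx as [Hx|Hx]; [left; now apply gen_ideal_bopr|].
    destruct IHy as [Hy|Hy]; [left; rewrite (bopC N HN); now apply gen_ideal_bopr|].
    now apply small_comb_bop.
Qed.

End HKFFinite.

Lemma has_card_of_incl (T : Type) (P : T -> Prop) (l : list T) :
  (forall x, P x -> In x l) -> exists n, has_card T P n.
Proof.
  intros Hl.
  set (dec := fun x y : T => excluded_middle_informative (x = y)).
  set (p := fun x => if excluded_middle_informative (P x) then true else false).
  exists (length (nodup dec (filter p l))), (nodup dec (filter p l)).
  split; [apply NoDup_nodup|split; [reflexivity|]].
  intros x; rewrite nodup_In, filter_In; unfold p.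
  destruct excluded_middle_informative as [Hx|Hx]; split.
  - auto.
  - tauto.
  - contradiction.
  - intros [_ E]; discriminate.
Qed.

Lemma HKF_exists (N : binoid_data) q : is_binoid N -> fin_generated N ->
  semipositive N -> 0 < q -> exists n, HKF_is N q n.
Proof.
  intros HN [gens Hgens] [_ [units Hunits]] Hq.
  apply has_card_of_incl with (small_combs N q units (nonunits N gens)).
  intros x Hx; destruct (gen_by_small_comb N HN q Hq gens x (Hgens x)) as [H|H].
  - contradiction.
  - now apply small_comb_in.
Qed.

Lemma NoDup_list_prod (A B : Type) (l : list A) (l' : list B) :
  NoDup l -> NoDup l' -> NoDup (list_prod l l').
Proof.
  intros Hl Hl'; induction Hl as [|a l Ha Hl IH]; simpl; [constructor|].
  apply NoDup_app; auto.
  - apply NoDup_map_NoDup_ForallPairs; auto. intros x y _ _ E; now injection E.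
  - intros [x y] H1 H2. apply in_map_iff in H1 as [z [E _]]; injection E as -> ->.
    apply in_prod_iff in H2 as [H2 _]; contradiction.
Qed.

Section SmashPoints.
Variables M N : binoid_data.
Local Notation mk := (smash_mk M N).

Lemma smash_mk_inf (a : M) (b : N) : a = binf M \/ b = binf N -> mk a b = None.
Proof.
  intros H; unfold smash_mk.
  destruct excluded_middle_informative as [[]|]; [destruct H; contradiction|reflexivity].
Qed.

Lemma smash_mk_pt (a : M) (b : N) h : mk a b = Some (exist _ (a, b) h).
Proof.
  unfold smash_mk; destruct excluded_middle_informative; [|contradiction].
  do 2 f_equal; apply proof_irrelevance.
Qed.

Lemma smash_pt_cases (x : smash M N) :
  x = None \/ exists a b, a <> binf M /\ b <> binf N /\ x = mk a b.
Proof.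
  destruct x as [[[a b] [ha hb]]|]; auto.
  right; exists a, b; repeat split; auto. symmetry; apply smash_mk_pt.
Qed.

Lemma smash_mk_inj a b c d : a <> binf M -> b <> binf N -> mk a b = mk c d -> a = c /\ b = d.
Proof.
  intros ha hb E; rewrite (smash_mk_pt a b (conj ha hb)) in E.
  destruct (classic (c <> binf M /\ d <> binf N)) as [h|h].
  - rewrite (smash_mk_pt c d h) in E; injection E; auto.
  - rewrite smash_mk_inf in E; [discriminate|].
    apply not_and_or in h; destruct h as [h|h]; apply NNPP in h; auto.
Qed.

Lemma has_card_smash (P : M -> Prop) (Q : N -> Prop) (R : smash M N -> Prop) a b :
  has_card M P a -> has_card N Q b ->
  (forall x, P x -> x <> binf M) -> (forall y, Q y -> y <> binf N) ->
  ~ R None ->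
  (forall x y, x <> binf M -> y <> binf N -> (R (mk x y) <-> P x /\ Q y)) ->
  has_card (smash M N) R (a * b).
Proof.
  intros [lP [DP [LP HP]]] [lQ [DQ [LQ HQ]]] nP nQ RNone HR.
  exists (map (fun p => mk (fst p) (snd p)) (list_prod lP lQ)); split; [|split].
  - apply NoDup_map_NoDup_ForallPairs; [|now apply NoDup_list_prod].
    intros [x y] [x' y'] Hxy _ E; simpl in E.
    apply in_prod_iff in Hxy as [Hx Hy]; apply HP in Hx; apply HQ in Hy.
    apply smash_mk_inj in E as [-> ->]; auto.
  - now rewrite length_map, length_prod, LP, LQ.
  - intros s; rewrite in_map_iff.
    destruct (smash_pt_cases s) as [->|[x [y [hx [hy ->]]]]]; split.
    + contradiction.
    + intros [[x y] [E Hxy]]; simpl in E.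
      apply in_prod_iff in Hxy as [Hx Hy]; apply HP in Hx; apply HQ in Hy.
      now rewrite (smash_mk_pt x y (conj (nP x Hx) (nQ y Hy))) in E.
    + intros H; apply HR in H as [Hx Hy]; auto.
      exists (x, y); split; [reflexivity|apply in_prod; firstorder].
    + intros [[x' y'] [E Hxy]]; simpl in E.
      apply in_prod_iff in Hxy as [Hx Hy]; apply HP in Hx; apply HQ in Hy.
      apply smash_mk_inj in E as [<- <-]; auto.
      apply HR; auto.
Qed.

End SmashPoints.

Section SmashIdeal.
Variables M N : binoid_data.
Hypothesis HM : is_binoid M.
Hypothesis HN : is_binoid N.
Local Notation S := (smash M N).
Local Notation mk := (smash_mk M N).

Lemma smash_op_mk a b c d : bop S (mk a b) (mk c d) = mk (bop M a c) (bop N b d).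
Proof.
  destruct (classic (a = binf M \/ b = binf N)) as [h|h].
  - rewrite (smash_mk_inf M N a b h), (smash_mk_inf M N (bop M a c)); [reflexivity|].
    destruct h as [-> | ->]; [left; apply bopinfl|right; apply bopinfl]; assumption.
  - apply not_or_and in h as [ha hb].
    rewrite (smash_mk_pt M N a b (conj ha hb)).
    destruct (classic (c = binf M \/ d = binf N)) as [h|h].
    + rewrite (smash_mk_inf M N c d h), (smash_mk_inf M N (bop M a c)); [reflexivity|].
      destruct h as [-> | ->]; [left; apply bopinfr|right; apply bopinfr]; assumption.
    + apply not_or_and in h as [hc hd].
      now rewrite (smash_mk_pt M N c d (conj hc hd)).
Qed.

Lemma smash_nsmul_mk n a b : nsmul S n (mk a b) = mk (nsmul M n a) (nsmul N n b).
Proof.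
  induction n as [|n IH]; [reflexivity|].
  simpl nsmul; rewrite IH; apply smash_op_mk.
Qed.

Hypothesis zeroM : bzero M <> binf M.
Hypothesis zeroN : bzero N <> binf N.

Lemma smash_unit_mk a b : is_unit S (mk a b) <-> is_unit M a /\ is_unit N b.
Proof.
  split.
  - intros [z Hz]; symmetry in Hz.
    change (mk (bzero M) (bzero N) = bop S (mk a b) z) in Hz.
    destruct (smash_pt_cases M N z) as [->|[c [d [_ [_ ->]]]]].
    + rewrite (smash_mk_pt M N _ _ (conj zeroM zeroN)) in Hz.
      destruct (mk a b) as [[[] ?]|]; discriminate.
    + rewrite smash_op_mk in Hz.
      apply smash_mk_inj in Hz as [Ha Hb]; auto.
      split; [exists c|exists d]; auto.
  - intros [[a' Ha] [b' Hb]]; exists (mk a' b').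
    now rewrite smash_op_mk, Ha, Hb.
Qed.

Variable q : nat.
Hypothesis Hq : 0 < q.

(* A non-unit of [S] is a non-unit in one factor; conversely [(x, 0)] and
   [(0, y)] are non-units of [S] for non-units [x], [y]. *)
Lemma smash_qideal_mk a b : a <> binf M -> b <> binf N ->
  qideal S q (Nplus S) (mk a b) <->
  qideal M q (Nplus M) a \/ qideal N q (Nplus N) b.
Proof.
  intros ha hb; rewrite (smash_mk_pt M N a b (conj ha hb)); split.
  - intros [E|[s [n [[g [Hg ->]] E]]]]; [discriminate|].
    destruct (smash_pt_cases M N g) as [->|[x [y [_ [_ ->]]]]].
    { destruct q; [lia|simpl in E; discriminate]. }
    destruct (smash_pt_cases M N n) as [->|[m [n' [_ [_ ->]]]]].
    { now destruct (nsmul S q (mk x y)) as [[[] ?]|]. }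
    rewrite <- (smash_mk_pt M N a b (conj ha hb)), smash_nsmul_mk, smash_op_mk in E.
    apply smash_mk_inj in E as [-> ->]; auto.
    unfold Nplus in Hg; rewrite smash_unit_mk in Hg; apply not_and_or in Hg as [Hx|Hy].
    + left; right; exists (nsmul M q x), m; split; auto; exists x; auto.
    + right; right; exists (nsmul N q y), n'; split; auto; exists y; auto.
  - rewrite <- (smash_mk_pt M N a b (conj ha hb)).
    intros [[E|[s [m [[x [Hx ->]] ->]]]]|[E|[s [n [[y [Hy ->]] ->]]]]];
      try contradiction.
    + right; exists (nsmul S q (mk x (bzero N))), (mk m b); split.
      * exists (mk x (bzero N)); split; auto.
        unfold Nplus in *; rewrite smash_unit_mk; tauto.
      * now rewrite smash_nsmul_mk, smash_op_mk, nsmul0, bop0l.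
    + right; exists (nsmul S q (mk (bzero M) y)), (mk a n); split.
      * exists (mk (bzero M) y); split; auto.
        unfold Nplus in *; rewrite smash_unit_mk; tauto.
      * now rewrite smash_nsmul_mk, smash_op_mk, nsmul0, bop0l.
Qed.

End SmashIdeal.

Theorem mainTheorem11 (M N : binoid_data) :
  is_binoid M -> is_binoid N ->
  fin_generated M -> fin_generated N ->
  semipositive M -> semipositive N ->
  forall q : nat, 0 < q ->
  exists a b : nat,
    HKF_is M q a /\ HKF_is N q b /\ HKF_is (smash M N) q (a * b).
Proof.
  intros HM HN fM fN sM sN q Hq.
  destruct (HKF_exists M q HM fM sM Hq) as [a Ha].
  destruct (HKF_exists N q HN fN sN Hq) as [b Hb].
  exists a, b; repeat split; auto.
  apply (has_card_smash M N (fun x => ~ qideal M q (Nplus M) x)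
           (fun y => ~ qideal N q (Nplus N) y)); auto.
  - intros x Hx ->; apply Hx; now left.
  - intros y Hy ->; apply Hy; now left.
  - intros H; apply H; now left.
  - intros x y hx hy.
    rewrite (smash_qideal_mk M N HM HN (semipositive_zero_neq_inf M HM sM)
               (semipositive_zero_neq_inf N HN sN) q Hq x y hx hy).
    tauto.
Qed.
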